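(* Let $K_1,K_2:\mathbb R\to(0,\infty)$ and $a:\mathbb R^2\to(0,\infty)$ be positive, bounded, smooth, and let $d\ge0$ be a constant. Consider $$\begin{aligned}\dot x_1&=x_1\Big[r_1\Big(1-\frac{x_1}{K_1(u_1)}\Big)-\frac{a(u_1,u_2)x_2}{1+ha(u_1,u_2)x_1}\Big],\\ \dot x_2&=x_2\Big[\frac{ea(u_1,u_2)x_1}{1+ha(u_1,u_2)x_1}-d+r_2\Big(1-\frac{x_2}{K_2(u_2)}\Big)\Big],\\ \dot u_1&=\sigma_1^2\Big[\frac{r_1x_1K_1'(u_1)}{K_1(u_1)^2}-\frac{x_2a_{u_1}(u_1,u_2)}{(1+ha(u_1,u_2)x_1)^2}\Big],\\ \dot u_2&=\sigma_2^2\Big[\frac{ex_1a_{u_2}(u_1,u_2)}{(1+ha(u_1,u_2)x_1)^2}+\frac{r_2x_2K_2'(u_2)}{K_2(u_2)^2}\Big],\end{aligned}$$ with constants $r_1,r_2,h,e,\sigma_1,\sigma_2>0$. (i) The host-only equilibrium $(K_1(u_1^* ),0,u_1^*,u_2^* )$ exists if $K_1'(u_1^* )=a_{u_2}(u_1^*,u_2^* )=0$, and it is locally asymptotically stable if $0<\frac{ea(u_1^*,u_2^* )K_1(u_1^* )}{1+ha(u_1^*,u_2^* )K_1(u_1^* )}<d-r_2$, $K_1''(u_1^* )<0$ and $a_{u_2u_2}(u_1^*,u_2^* )<0$. (ii) If $d<r_2$, the parasite-only equilibrium $\big(0,K_2(u_2^* )(1-\frac{d}{r_2}),u_1^*,u_2^*\big)$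 exists if $K_2'(u_2^* )=a_{u_1}(u_1^*,u_2^* )=0$, and it is locally asymptotically stable if $\frac{r_1}{a(u_1^*,u_2^* )}<K_2(u_2^* )(1-\frac{d}{r_2})$, $a_{u_1u_1}(u_1^*,u_2^* )>0$ and $K_2''(u_2^* )<0$.
   Context: Co-evolutionary host–parasite model with trait-independent parasite death rate $d$; $x_1,x_2$ host and parasite densities, $u_1,u_2$ mean traits, subscripts on $a$ denote partial derivatives. *)

From Stdlib Require Import Reals.
From Coquelicot Require Import Coquelicot.
From Stdlib Require Import List.
Import ListNotations.
Open Scope R_scope.

Definition pos_bounded1 (f : R -> R) : Prop :=
  (forall x, 0 < f x) /\ exists M, forall x, f x <= M.

Definition pos_bounded2 (f : R -> R -> R) : Prop :=
  (forall x y, 0 < f x y) /\ exists M, forall x y, f x y <= M.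

Definition smooth1 (f : R -> R) : Prop :=
  forall (n : nat) (x : R), ex_derive_n f n x.

Definition pd1 (f : R -> R -> R) : R -> R -> R :=
  fun x y => Derive (fun s => f s y) x.
Definition pd2 (f : R -> R -> R) : R -> R -> R :=
  fun x y => Derive (fun s => f x s) y.

(* iterated partial derivatives: true = w.r.t. first variable, false = second *)
Fixpoint pderivs (l : list bool) (f : R -> R -> R) : R -> R -> R :=
  match l with
  | nil => f
  | cons b l' => if b then pd1 (pderivs l' f) else pd2 (pderivs l' f)
  end.

Definition smooth2 (f : R -> R -> R) : Prop :=
  forall (l : list bool),
    (forall x y, continuity_2d_pt (pderivs l f) x y) /\
    (forall x y, ex_derive (fun s => pderivs l f s y) x /\
                 ex_derive (fun s => pderivs l f x s) y).

Definition state : Type := (R * R * R * R)%type.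
Definition c1 (p : state) : R := fst (fst (fst p)).
Definition c2 (p : state) : R := snd (fst (fst p)).
Definition c3 (p : state) : R := snd (fst p).
Definition c4 (p : state) : R := snd p.
Definition comps : list (state -> R) := [c1; c2; c3; c4].

Definition dist4 (p q : state) : R :=
  Rmax (Rmax (Rabs (c1 p - c1 q)) (Rabs (c2 p - c2 q)))
       (Rmax (Rabs (c3 p - c3 q)) (Rabs (c4 p - c4 q))).

Definition solution_on (V : state -> state) (phi : R -> state) (T : Rbar) : Prop :=
  forall c, List.In c comps ->
    filterlim (fun s => c (phi s)) (at_right 0) (locally (c (phi 0))) /\
    (forall t, 0 < t -> Rbar_lt (Finite t) T ->
       is_derive (fun s => c (phi s)) t (c (V (phi t)))).

Definition equilibrium (V : state -> state) (p : state) : Prop :=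
  V p = (0, 0, 0, 0).

Definition loc_asympt_stable (V : state -> state) (p : state) : Prop :=
  equilibrium V p /\
  (forall eps, 0 < eps -> exists delta, 0 < delta /\
     forall phi T, solution_on V phi T -> dist4 (phi 0) p < delta ->
       forall t, 0 <= t -> Rbar_lt (Finite t) T -> dist4 (phi t) p < eps) /\
  (exists delta, 0 < delta /\
     forall phi, solution_on V phi p_infty -> dist4 (phi 0) p < delta ->
       forall c, List.In c comps -> is_lim (fun t => c (phi t)) p_infty (c p)).

Definition hp_field (K1 K2 : R -> R) (a : R -> R -> R)
  (r1 r2 h e d s1 s2 : R) (p : state) : state :=
  let x1 := c1 p in let x2 := c2 p in let u1 := c3 p in let u2 := c4 p in
  let A := a u1 u2 in
  ( x1 * (r1 * (1 - x1 / K1 u1) - A * x2 / (1 + h * A * x1)),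
    x2 * (e * A * x1 / (1 + h * A * x1) - d + r2 * (1 - x2 / K2 u2)),
    s1 ^ 2 * (r1 * x1 * Derive K1 u1 / (K1 u1) ^ 2
              - x2 * pd1 a u1 u2 / (1 + h * A * x1) ^ 2),
    s2 ^ 2 * (e * x1 * pd2 a u1 u2 / (1 + h * A * x1) ^ 2
              + r2 * x2 * Derive K2 u2 / (K2 u2) ^ 2) ).

(** At both boundary equilibria the Jacobian of the vector field is lower triangular after
    reordering the coordinates (as x2, u1, x1, u2 at the host-only point and as x1, x2, u2, u1
    at the parasite-only point), and the hypotheses say exactly that its diagonal entries are
    negative.  For such a matrix a diagonal quadratic form with geometrically decreasing
    weights is a strict Lyapunov function of the linearisation.  Smoothness of K1, K2 and a
    bounds the nonlinear remainder of the field quadratically, so near the equilibrium the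
    same form still decreases at an exponential rate along every solution (Gronwall), which
    gives both stability and attractivity. *)

From Stdlib Require Import Reals Lra Psatz List Classical.
From Coquelicot Require Import Coquelicot.
Open Scope R_scope.

(** * First-order expansions with quadratic remainder *)

Definition quad_approx2 (f : R -> R -> R) (x y lx ly : R) : Prop :=
  exists C d, 0 < d /\ forall u v, Rabs (u - x) < d -> Rabs (v - y) < d ->
    Rabs (f u v - f x y - (lx * (u - x) + ly * (v - y))) <=
    C * (Rmax (Rabs (u - x)) (Rabs (v - y))) ^ 2.

Definition quad_approx (f : state -> R) (p : state) (g1 g2 g3 g4 : R) : Prop :=
  exists C d, 0 < d /\ forall q, dist4 q p < d ->
    Rabs (f q - f p - (g1 * (c1 q - c1 p) + g2 * (c2 q - c2 p)
                      + g3 * (c3 q - c3 p) + g4 * (c4 q - c4 p))) <=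
    C * (dist4 q p) ^ 2.

Lemma Rle_mul_abs_sqr (C x : R) : C * x ^ 2 <= Rabs C * x ^ 2.
Proof. apply Rmult_le_compat_r; [apply pow2_ge_0 | apply Rle_abs]. Qed.

Lemma dist4_c1 q p : Rabs (c1 q - c1 p) <= dist4 q p.
Proof. unfold dist4. eapply Rle_trans; [apply Rmax_l | apply Rmax_l]. Qed.
Lemma dist4_c2 q p : Rabs (c2 q - c2 p) <= dist4 q p.
Proof. unfold dist4. eapply Rle_trans; [apply Rmax_r | apply Rmax_l]. Qed.
Lemma dist4_c3 q p : Rabs (c3 q - c3 p) <= dist4 q p.
Proof. unfold dist4. eapply Rle_trans; [apply Rmax_l | apply Rmax_r]. Qed.
Lemma dist4_c4 q p : Rabs (c4 q - c4 p) <= dist4 q p.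
Proof. unfold dist4. eapply Rle_trans; [apply Rmax_r | apply Rmax_r]. Qed.
Lemma dist4_ge_0 q p : 0 <= dist4 q p.
Proof. eapply Rle_trans; [apply Rabs_pos | apply dist4_c1]. Qed.

Lemma linear_form_bound q p g1 g2 g3 g4 :
  Rabs (g1 * (c1 q - c1 p) + g2 * (c2 q - c2 p) + g3 * (c3 q - c3 p) + g4 * (c4 q - c4 p))
  <= (Rabs g1 + Rabs g2 + Rabs g3 + Rabs g4) * dist4 q p.
Proof.
  pose proof (Rabs_triang (g1 * (c1 q - c1 p) + g2 * (c2 q - c2 p) + g3 * (c3 q - c3 p))
                (g4 * (c4 q - c4 p))).
  pose proof (Rabs_triang (g1 * (c1 q - c1 p) + g2 * (c2 q - c2 p)) (g3 * (c3 q - c3 p))).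
  pose proof (Rabs_triang (g1 * (c1 q - c1 p)) (g2 * (c2 q - c2 p))).
  rewrite !Rabs_mult in *.
  pose proof (Rmult_le_compat_l _ _ _ (Rabs_pos g1) (dist4_c1 q p)).
  pose proof (Rmult_le_compat_l _ _ _ (Rabs_pos g2) (dist4_c2 q p)).
  pose proof (Rmult_le_compat_l _ _ _ (Rabs_pos g3) (dist4_c3 q p)).
  pose proof (Rmult_le_compat_l _ _ _ (Rabs_pos g4) (dist4_c4 q p)).
  lra.
Qed.

Lemma quad_approx_loc_lipschitz f p g1 g2 g3 g4 : quad_approx f p g1 g2 g3 g4 ->
  exists L d, 0 < d /\ 0 <= L /\
    forall q, dist4 q p < d -> Rabs (f q - f p) <= L * dist4 q p.
Proof.
  intros (C & d & Hd & H).
  pose proof (Rabs_pos g1); pose proof (Rabs_pos g2); pose proof (Rabs_pos g3);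
  pose proof (Rabs_pos g4); pose proof (Rabs_pos C).
  exists (Rabs g1 + Rabs g2 + Rabs g3 + Rabs g4 + Rabs C), (Rmin d 1).
  split; [apply Rmin_pos; lra | split; [lra |]].
  intros q [Hqd Hq1]%Rmin_Rgt.
  specialize (H q Hqd). pose proof (linear_form_bound q p g1 g2 g3 g4).
  pose proof (dist4_ge_0 q p). pose proof (Rle_mul_abs_sqr C (dist4 q p)).
  set (lin := g1 * (c1 q - c1 p) + g2 * (c2 q - c2 p) + g3 * (c3 q - c3 p)
              + g4 * (c4 q - c4 p)) in *.
  replace (f q - f p) with ((f q - f p - lin) + lin) by ring.
  eapply Rle_trans; [apply Rabs_triang |].
  assert (Rabs C * dist4 q p ^ 2 <= Rabs C * dist4 q p).
  { apply Rmult_le_compat_l; [apply Rabs_pos |]. simpl. nra. }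
  lra.
Qed.

Lemma quad_approx_comp2 a f g p la lb gf1 gf2 gf3 gf4 gg1 gg2 gg3 gg4 :
  quad_approx2 a (f p) (g p) la lb ->
  quad_approx f p gf1 gf2 gf3 gf4 -> quad_approx g p gg1 gg2 gg3 gg4 ->
  quad_approx (fun q => a (f q) (g q)) p (la * gf1 + lb * gg1) (la * gf2 + lb * gg2)
     (la * gf3 + lb * gg3) (la * gf4 + lb * gg4).
Proof.
  intros (Ca & da & Hda & Ha) Hf Hg.
  destruct (quad_approx_loc_lipschitz _ _ _ _ _ _ Hf) as (Lf & df' & Hdf' & HLf & Hlf).
  destruct (quad_approx_loc_lipschitz _ _ _ _ _ _ Hg) as (Lg & dg' & Hdg' & HLg & Hlg).
  destruct Hf as (Cf & df & Hdf & Hf). destruct Hg as (Cg & dg & Hdg & Hg).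
  exists (Rabs Ca * (Lf + Lg) ^ 2 + Rabs la * Rabs Cf + Rabs lb * Rabs Cg),
    (Rmin (Rmin (Rmin df dg) (Rmin df' dg')) (da / (Lf + Lg + 1))).
  split. { repeat apply Rmin_pos; try lra. apply Rdiv_lt_0_compat; lra. }
  intros q Hq.
  apply Rmin_Rgt in Hq as [[[Hq1 Hq2]%Rmin_Rgt [Hq3 Hq4]%Rmin_Rgt]%Rmin_Rgt Hq5].
  specialize (Hf q Hq1). specialize (Hg q Hq2). specialize (Hlf q Hq3). specialize (Hlg q Hq4).
  pose proof (dist4_ge_0 q p) as D0. set (D := dist4 q p) in *.
  assert (Hda' : (Lf + Lg + 1) * D < da).
  { apply (Rmult_lt_compat_l (Lf + Lg + 1)) in Hq5; [| lra].
    replace ((Lf + Lg + 1) * (da / (Lf + Lg + 1))) with da in Hq5 by (field; lra). exact Hq5. }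
  assert (0 <= Lf * D /\ 0 <= Lg * D) as [] by (split; apply Rmult_le_pos; lra).
  assert (Hu : Rabs (f q - f p) < da) by lra.
  assert (Hv : Rabs (g q - g p) < da) by lra.
  specialize (Ha _ _ Hu Hv).
  assert (Hm : Rmax (Rabs (f q - f p)) (Rabs (g q - g p)) ^ 2 <= ((Lf + Lg) * D) ^ 2).
  { apply pow_incr. split; [eapply Rle_trans; [apply Rabs_pos | apply Rmax_l] |].
    apply Rmax_lub; lra. }
  set (lf := gf1 * (c1 q - c1 p) + gf2 * (c2 q - c2 p) + gf3 * (c3 q - c3 p)
             + gf4 * (c4 q - c4 p)) in *.
  set (lg := gg1 * (c1 q - c1 p) + gg2 * (c2 q - c2 p) + gg3 * (c3 q - c3 p)
             + gg4 * (c4 q - c4 p)) in *.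
  replace ((la * gf1 + lb * gg1) * (c1 q - c1 p) + (la * gf2 + lb * gg2) * (c2 q - c2 p)
           + (la * gf3 + lb * gg3) * (c3 q - c3 p) + (la * gf4 + lb * gg4) * (c4 q - c4 p))
    with (la * lf + lb * lg) by (unfold lf, lg; ring).
  replace (a (f q) (g q) - a (f p) (g p) - (la * lf + lb * lg)) with
    ((a (f q) (g q) - a (f p) (g p) - (la * (f q - f p) + lb * (g q - g p)))
     + la * (f q - f p - lf) + lb * (g q - g p - lg)) by ring.
  eapply Rle_trans; [apply Rabs_triang |].
  eapply Rle_trans; [apply Rplus_le_compat_r, Rabs_triang |].
  rewrite !Rabs_mult.
  pose proof (Rle_mul_abs_sqr Ca (Rmax (Rabs (f q - f p)) (Rabs (g q - g p)))).
  pose proof (Rmult_le_compat_l _ _ _ (Rabs_pos Ca) Hm).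
  pose proof (Rmult_le_compat_l _ _ _ (Rabs_pos la)
                (Rle_trans _ _ _ Hf (Rle_mul_abs_sqr Cf D))).
  pose proof (Rmult_le_compat_l _ _ _ (Rabs_pos lb)
                (Rle_trans _ _ _ Hg (Rle_mul_abs_sqr Cg D))).
  replace ((Rabs Ca * (Lf + Lg) ^ 2 + Rabs la * Rabs Cf + Rabs lb * Rabs Cg) * D ^ 2) with
    (Rabs Ca * ((Lf + Lg) * D) ^ 2 + Rabs la * (Rabs Cf * D ^ 2)
     + Rabs lb * (Rabs Cg * D ^ 2)) by ring.
  lra.
Qed.

Lemma quad_approx_ext f f' p g1 g2 g3 g4 : (forall q, f q = f' q) ->
  quad_approx f p g1 g2 g3 g4 -> quad_approx f' p g1 g2 g3 g4.
Proof. intros E (C & d & Hd & H). exists C, d. split; auto. intros q Hq. rewrite <- !E. auto. Qed.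

Ltac quad_approx_exact :=
  exists 0, 1; split; [lra |]; intros ? _;
  match goal with |- Rabs ?e <= _ => replace e with 0 by ring end; rewrite Rabs_R0; lra.

Lemma quad_approx_const k p : quad_approx (fun _ => k) p 0 0 0 0.
Proof. quad_approx_exact. Qed.
Lemma quad_approx_c1 p : quad_approx c1 p 1 0 0 0. Proof. quad_approx_exact. Qed.
Lemma quad_approx_c2 p : quad_approx c2 p 0 1 0 0. Proof. quad_approx_exact. Qed.
Lemma quad_approx_c3 p : quad_approx c3 p 0 0 1 0. Proof. quad_approx_exact. Qed.
Lemma quad_approx_c4 p : quad_approx c4 p 0 0 0 1. Proof. quad_approx_exact. Qed.

Lemma Rabs_mult_le_Rmax_sqr u v : Rabs u * Rabs v <= Rmax (Rabs u) (Rabs v) ^ 2.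
Proof.
  pose proof (Rabs_pos u); pose proof (Rabs_pos v).
  pose proof (Rmax_l (Rabs u) (Rabs v)); pose proof (Rmax_r (Rabs u) (Rabs v)). simpl. nra.
Qed.

Lemma quad_approx2_plus x y : quad_approx2 Rplus x y 1 1.
Proof.
  exists 0, 1. split; [lra |]. intros u v _ _.
  replace (_ - _ - _) with 0 by ring. rewrite Rabs_R0. simpl; lra.
Qed.

Lemma quad_approx2_minus x y : quad_approx2 Rminus x y 1 (-1).
Proof.
  exists 0, 1. split; [lra |]. intros u v _ _.
  replace (_ - _ - _) with 0 by ring. rewrite Rabs_R0. simpl; lra.
Qed.

Lemma quad_approx2_mult x y : quad_approx2 Rmult x y y x.
Proof.
  exists 1, 1. split; [lra |]. intros u v _ _.
  replace (_ - _ - _) with ((u - x) * (v - y)) by ring.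
  rewrite Rabs_mult, Rmult_1_l. apply Rabs_mult_le_Rmax_sqr.
Qed.

Lemma quad_approx2_inv x y : x <> 0 -> quad_approx2 (fun u _ => / u) x y (- / x ^ 2) 0.
Proof.
  intros Hx. assert (Ha : 0 < Rabs x) by (apply Rabs_pos_lt; auto).
  exists (2 / Rabs x ^ 3), (Rabs x / 2). split; [lra |]. intros u v Hu _.
  assert (Hu0 : Rabs x / 2 <= Rabs u).
  { pose proof (Rabs_triang_inv x (x - u)). replace (x - (x - u)) with u in H by ring.
    rewrite Rabs_minus_sym in Hu. lra. }
  assert (Hun : u <> 0) by (intros ->; rewrite Rabs_R0 in Hu0; lra).
  replace (/ u - / x - (- / x ^ 2 * (u - x) + 0 * (v - y))) with ((u - x) ^ 2 / (u * x ^ 2))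
    by (field; auto).
  unfold Rdiv. rewrite Rabs_mult, Rabs_inv, Rabs_mult, <- !RPow_abs.
  assert (Hm : Rabs (u - x) ^ 2 <= Rmax (Rabs (u - x)) (Rabs (v - y)) ^ 2).
  { apply pow_incr. split; [apply Rabs_pos | apply Rmax_l]. }
  assert (Hi : / (Rabs u * Rabs x ^ 2) <= 2 * / Rabs x ^ 3).
  { replace (2 * / Rabs x ^ 3) with (/ (Rabs x ^ 3 / 2)) by (field; lra).
    apply Rinv_le_contravar; [apply Rdiv_lt_0_compat; [apply pow_lt |]; lra |].
    simpl. nra. }
  rewrite RPow_abs.
  apply Rle_trans with (Rabs ((u - x) ^ 2) * (2 * / Rabs x ^ 3)).
  - apply Rmult_le_compat_l; [apply Rabs_pos | exact Hi].
  - rewrite <- RPow_abs, (Rmult_comm (Rabs (u - x) ^ 2)).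
    apply Rmult_le_compat_l; [| exact Hm].
    apply Rmult_le_pos; [lra |]. apply Rlt_le, Rinv_0_lt_compat, pow_lt; lra.
Qed.

Lemma quad_approx2_of_ex_diff_n f x y : (forall n u v, ex_diff_n f n u v) ->
  quad_approx2 f x y (Derive (fun s => f s y) x) (Derive (fun s => f x s) y).
Proof.
  intros Hf. destruct (Taylor_Lagrange_2d f 1 x y) as [D [del Hdel]].
  { exists (mkposreal 1 Rlt_0_1). intros; apply Hf. }
  exists D, del. split; [apply cond_pos |]. intros u v Hu Hv. specialize (Hdel u v Hu Hv).
  unfold DL_pol, differential, partial_derive, Binomial.C in Hdel. simpl in Hdel |- *.
  match goal with H : Rabs ?a <= _ |- Rabs ?b <= _ => replace b with a by (field; auto) end.
  exact Hdel.
Qed.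

Lemma ex_diff_n_const n c u v : ex_diff_n (fun _ _ => c) n u v.
Proof.
  revert c u v. induction n as [| n IHn]; intros c u v; simpl.
  - split; [apply continuity_2d_pt_const | exact I].
  - split; [apply continuity_2d_pt_const |].
    split; [apply ex_derive_const |]. split; [apply ex_derive_const |].
    split; (eapply ex_diff_n_ext_loc; [| apply (IHn 0 u v)]);
      exists (mkposreal 1 Rlt_0_1); intros; simpl; rewrite Derive_const; reflexivity.
Qed.

Lemma smooth2_ex_diff_n a : smooth2 a -> forall n l u v, ex_diff_n (pderivs l a) n u v.
Proof.
  intros Ha n. induction n as [| n IHn]; intros l u v; destruct (Ha l) as [Hc Hd].
  - split; [exact (Hc u v) | exact I].
  - split; [exact (Hc u v) |]. split; [exact (proj1 (Hd u v)) |]. split; [exact (proj2 (Hd u v)) |].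
    split; [exact (IHn (true :: l) u v) | exact (IHn (false :: l) u v)].
Qed.

Lemma smooth1_ex_diff_n K : smooth1 K -> forall n k u v, ex_diff_n (fun u _ => Derive_n K k u) n u v.
Proof.
  intros HK n. induction n as [| n IHn]; intros k u v.
  all: assert (Hc : continuity_2d_pt (fun u _ => Derive_n K k u) u v)
         by (apply continuity_1d_2d_pt_comp with (g := fun u _ => u);
             [| apply continuity_2d_pt_id1];
             exact (proj2 (continuity_pt_filterlim _ _)
                      (ex_derive_continuous (Derive_n K k) u (HK (S k) u)))).
  - split; [exact Hc | exact I].
  - split; [exact Hc |]. split; [exact (HK (S k) u) |]. split; [apply ex_derive_const |].
    split; [exact (IHn (S k) u v) |].
    eapply ex_diff_n_ext_loc; [| apply (ex_diff_n_const n 0 u v)].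
    exists (mkposreal 1 Rlt_0_1); intros; simpl; rewrite Derive_const; reflexivity.
Qed.

Lemma quad_approx2_pderivs a l x y : smooth2 a ->
  quad_approx2 (pderivs l a) x y (pderivs (true :: l) a x y) (pderivs (false :: l) a x y).
Proof. intros Ha. apply quad_approx2_of_ex_diff_n. intros; apply smooth2_ex_diff_n, Ha. Qed.

Lemma quad_approx2_Derive_n K k x y : smooth1 K ->
  quad_approx2 (fun u _ => Derive_n K k u) x y (Derive_n K (S k) x) 0.
Proof.
  intros HK. pose proof (quad_approx2_of_ex_diff_n (fun u _ => Derive_n K k u) x y) as H.
  cbv beta in H. rewrite Derive_const in H. apply H. intros; apply smooth1_ex_diff_n, HK.
Qed.

Section QuadApproxRules.

Variables (f g : state -> R) (p : state) (gf1 gf2 gf3 gf4 gg1 gg2 gg3 gg4 : R).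
Hypothesis Hf : quad_approx f p gf1 gf2 gf3 gf4.
Hypothesis Hg : quad_approx g p gg1 gg2 gg3 gg4.

Lemma quad_approx_plus : quad_approx (fun q => f q + g q) p
  (1 * gf1 + 1 * gg1) (1 * gf2 + 1 * gg2) (1 * gf3 + 1 * gg3) (1 * gf4 + 1 * gg4).
Proof. apply (quad_approx_comp2 Rplus); auto. apply quad_approx2_plus. Qed.

Lemma quad_approx_minus : quad_approx (fun q => f q - g q) p
  (1 * gf1 + -1 * gg1) (1 * gf2 + -1 * gg2) (1 * gf3 + -1 * gg3) (1 * gf4 + -1 * gg4).
Proof. apply (quad_approx_comp2 Rminus); auto. apply quad_approx2_minus. Qed.

Lemma quad_approx_mult : quad_approx (fun q => f q * g q) p
  (g p * gf1 + f p * gg1) (g p * gf2 + f p * gg2) (g p * gf3 + f p * gg3) (g p * gf4 + f p * gg4).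
Proof. apply (quad_approx_comp2 Rmult); auto. apply quad_approx2_mult. Qed.

Lemma quad_approx_inv : g p <> 0 -> quad_approx (fun q => / g q) p
  (- / g p ^ 2 * gg1 + 0 * gg1) (- / g p ^ 2 * gg2 + 0 * gg2)
  (- / g p ^ 2 * gg3 + 0 * gg3) (- / g p ^ 2 * gg4 + 0 * gg4).
Proof. intros H. apply (quad_approx_comp2 (fun u _ => / u) g g); auto. apply quad_approx2_inv, H. Qed.

Lemma quad_approx_div : g p <> 0 -> quad_approx (fun q => f q / g q) p
  (/ g p * gf1 + f p * (- / g p ^ 2 * gg1 + 0 * gg1))
  (/ g p * gf2 + f p * (- / g p ^ 2 * gg2 + 0 * gg2))
  (/ g p * gf3 + f p * (- / g p ^ 2 * gg3 + 0 * gg3))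
  (/ g p * gf4 + f p * (- / g p ^ 2 * gg4 + 0 * gg4)).
Proof.
  intros H. apply (quad_approx_comp2 Rmult f (fun q => / g q));
    [apply quad_approx2_mult | exact Hf | apply quad_approx_inv, H].
Qed.

Lemma quad_approx_pow2 : quad_approx (fun q => f q ^ 2) p
  (f p * gf1 + f p * gf1) (f p * gf2 + f p * gf2) (f p * gf3 + f p * gf3) (f p * gf4 + f p * gf4).
Proof.
  eapply quad_approx_ext; [| apply (quad_approx_comp2 Rmult f f); auto; apply quad_approx2_mult].
  intros; simpl; ring.
Qed.

Lemma quad_approx_comp_smooth1 K : smooth1 K -> quad_approx (fun q => K (f q)) p
  (Derive_n K 1 (f p) * gf1 + 0 * gf1) (Derive_n K 1 (f p) * gf2 + 0 * gf2)
  (Derive_n K 1 (f p) * gf3 + 0 * gf3) (Derive_n K 1 (f p) * gf4 + 0 * gf4).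
Proof.
  intros HK. apply (quad_approx_comp2 (fun u _ => Derive_n K 0 u) f f); auto.
  apply quad_approx2_Derive_n, HK.
Qed.

Lemma quad_approx_comp_Derive K : smooth1 K -> quad_approx (fun q => Derive K (f q)) p
  (Derive_n K 2 (f p) * gf1 + 0 * gf1) (Derive_n K 2 (f p) * gf2 + 0 * gf2)
  (Derive_n K 2 (f p) * gf3 + 0 * gf3) (Derive_n K 2 (f p) * gf4 + 0 * gf4).
Proof.
  intros HK. apply (quad_approx_comp2 (fun u _ => Derive_n K 1 u) f f); auto.
  apply quad_approx2_Derive_n, HK.
Qed.

Lemma quad_approx_comp_pderivs a l : smooth2 a -> quad_approx (fun q => pderivs l a (f q) (g q)) p
  (pderivs (true :: l) a (f p) (g p) * gf1 + pderivs (false :: l) a (f p) (g p) * gg1)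
  (pderivs (true :: l) a (f p) (g p) * gf2 + pderivs (false :: l) a (f p) (g p) * gg2)
  (pderivs (true :: l) a (f p) (g p) * gf3 + pderivs (false :: l) a (f p) (g p) * gg3)
  (pderivs (true :: l) a (f p) (g p) * gf4 + pderivs (false :: l) a (f p) (g p) * gg4).
Proof. intros Ha. apply (quad_approx_comp2 (pderivs l a)); auto. apply quad_approx2_pderivs, Ha. Qed.

End QuadApproxRules.

(** * Negative definite weighted forms *)

Lemma young_cross_term wi wj L B m zi zj :
  0 <= wi -> Rabs L <= B -> 0 < m -> wi * (32 * B ^ 2) <= wj * m ^ 2 ->
  wi * L * zi * zj <= wi * (m / 8) * zi ^ 2 + wj * (m / 16) * zj ^ 2.
Proof.
  intros Hwi HL Hm Hw.
  assert (H1 : L * (zi * zj) <= B * (Rabs zi * Rabs zj)).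
  { eapply Rle_trans; [apply Rle_abs |]. rewrite !Rabs_mult.
    apply Rmult_le_compat_r; [apply Rmult_le_pos; apply Rabs_pos | exact HL]. }
  assert (H2 : B * (Rabs zi * Rabs zj) <= (m / 8) * zi ^ 2 + (2 * B ^ 2 / m) * zj ^ 2).
  { assert (0 <= 2 * (m * Rabs zi / 4 - B * Rabs zj) ^ 2)
      by (apply Rmult_le_pos; [lra | apply pow2_ge_0]).
    rewrite <- (pow2_abs zi), <- (pow2_abs zj).
    apply (Rmult_le_reg_l m); [lra |].
    replace (m * (m / 8 * Rabs zi ^ 2 + 2 * B ^ 2 / m * Rabs zj ^ 2))
      with (m ^ 2 / 8 * Rabs zi ^ 2 + 2 * B ^ 2 * Rabs zj ^ 2) by (field; lra).
    nra. }
  assert (H3 : wi * (2 * B ^ 2 / m) <= wj * (m / 16)).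
  { apply (Rmult_le_reg_l (16 * m)); [lra |].
    replace (16 * m * (wi * (2 * B ^ 2 / m))) with (wi * (32 * B ^ 2)) by (field; lra).
    replace (16 * m * (wj * (m / 16))) with (wj * m ^ 2) by (field; lra). exact Hw. }
  pose proof (Rmult_le_compat_r _ _ _ (pow2_ge_0 zj) H3).
  pose proof (Rmult_le_compat_l _ _ _ Hwi (Rle_trans _ _ _ H1 H2)).
  nra.
Qed.

(* Each cross term [L_ij z_i z_j] (i > j) is absorbed by [young_cross_term] into the
   diagonal terms; the geometric weights [r ^ (i - 1)] make the share charged to the
   heavier coordinate [j] small enough. *)
Lemma lower_triangular_form_neg_def_margin m L11 L21 L22 L31 L32 L33 L41 L42 L43 L44 :
  0 < m -> L11 <= - m -> L22 <= - m -> L33 <= - m -> L44 <= - m ->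
  exists w1 w2 w3 w4, 0 < w1 /\ 0 < w2 /\ 0 < w3 /\ 0 < w4 /\
  forall z1 z2 z3 z4,
    w1 * z1 * (L11 * z1) + w2 * z2 * (L21 * z1 + L22 * z2)
    + w3 * z3 * (L31 * z1 + L32 * z2 + L33 * z3)
    + w4 * z4 * (L41 * z1 + L42 * z2 + L43 * z3 + L44 * z4)
    <= - (m / 4) * (w1 * z1 ^ 2 + w2 * z2 ^ 2 + w3 * z3 ^ 2 + w4 * z4 ^ 2).
Proof.
  intros Hm Hm1 Hm2 Hm3 Hm4.
  set (B := 1 + Rabs L21 + Rabs L31 + Rabs L32 + Rabs L41 + Rabs L42 + Rabs L43).
  pose proof (Rabs_pos L21); pose proof (Rabs_pos L31); pose proof (Rabs_pos L32);
  pose proof (Rabs_pos L41); pose proof (Rabs_pos L42); pose proof (Rabs_pos L43).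
  assert (HB : 1 <= B) by (unfold B; lra).
  set (r := m ^ 2 / (32 * B ^ 2 + m ^ 2)).
  assert (Hden : 0 < 32 * B ^ 2 + m ^ 2) by nra.
  assert (Hr : 0 < r) by (apply Rdiv_lt_0_compat; nra).
  assert (Hr1 : r < 1).
  { apply (Rmult_lt_reg_r (32 * B ^ 2 + m ^ 2)); [lra |]. unfold r. field_simplify; nra. }
  assert (Hrb : r * (32 * B ^ 2) <= m ^ 2).
  { apply (Rmult_le_reg_r (32 * B ^ 2 + m ^ 2)); [lra |]. unfold r. field_simplify; nra. }
  assert (HwB : forall wi wj, 0 <= wj -> wi <= r * wj -> wi * (32 * B ^ 2) <= wj * m ^ 2).
  { intros wi wj Hwj Hij. apply Rle_trans with (r * wj * (32 * B ^ 2)).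
    - apply Rmult_le_compat_r; [nra | exact Hij].
    - replace (r * wj * (32 * B ^ 2)) with (wj * (r * (32 * B ^ 2))) by ring.
      apply Rmult_le_compat_l; lra. }
  assert (Hr2 : 0 < r * r) by nra. assert (Hr3 : 0 < r * r * r) by nra.
  exists 1, r, (r * r), (r * r * r).
  split; [lra | split; [lra | split; [lra | split; [lra |]]]].
  intros z1 z2 z3 z4.
  pose proof (young_cross_term r 1 L21 B m z2 z1 ltac:(lra) ltac:(unfold B; lra) Hm
                (HwB r 1 ltac:(lra) ltac:(lra))).
  pose proof (young_cross_term (r * r) 1 L31 B m z3 z1 ltac:(lra) ltac:(unfold B; lra) Hm
                (HwB (r * r) 1 ltac:(lra) ltac:(nra))).
  pose proof (young_cross_term (r * r) r L32 B m z3 z2 ltac:(lra) ltac:(unfold B; lra) Hm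
                (HwB (r * r) r ltac:(lra) ltac:(nra))).
  pose proof (young_cross_term (r * r * r) 1 L41 B m z4 z1 ltac:(lra) ltac:(unfold B; lra) Hm
                (HwB (r * r * r) 1 ltac:(lra) ltac:(nra))).
  pose proof (young_cross_term (r * r * r) r L42 B m z4 z2 ltac:(lra) ltac:(unfold B; lra) Hm
                (HwB (r * r * r) r ltac:(lra) ltac:(nra))).
  pose proof (young_cross_term (r * r * r) (r * r) L43 B m z4 z3 ltac:(lra) ltac:(unfold B; lra) Hm
                (HwB (r * r * r) (r * r) ltac:(lra) ltac:(nra))).
  assert (Hdiag : forall w L z, 0 <= w -> L <= - m -> w * z * (L * z) <= - m * (w * z ^ 2)).
  { intros w L z Hw HL. replace (w * z * (L * z)) with (L * (w * z ^ 2)) by ring.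
    apply Rmult_le_compat_r; [apply Rmult_le_pos; [exact Hw | apply pow2_ge_0] | exact HL]. }
  pose proof (Hdiag 1 L11 z1 ltac:(lra) Hm1); pose proof (Hdiag r L22 z2 ltac:(lra) Hm2);
  pose proof (Hdiag (r * r) L33 z3 ltac:(lra) Hm3);
  pose proof (Hdiag (r * r * r) L44 z4 ltac:(lra) Hm4).
  assert (Hsq : forall w z, 0 <= w -> 0 <= m * (w * z ^ 2))
    by (intros; apply Rmult_le_pos; [lra | apply Rmult_le_pos; [lra | apply pow2_ge_0]]).
  pose proof (Hsq 1 z1 ltac:(lra)); pose proof (Hsq r z2 ltac:(lra));
  pose proof (Hsq (r * r) z3 ltac:(lra)); pose proof (Hsq (r * r * r) z4 ltac:(lra)).
  nra.
Qed.

Lemma lower_triangular_form_neg_def L11 L21 L22 L31 L32 L33 L41 L42 L43 L44 :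
  L11 < 0 -> L22 < 0 -> L33 < 0 -> L44 < 0 ->
  exists w1 w2 w3 w4 c, 0 < w1 /\ 0 < w2 /\ 0 < w3 /\ 0 < w4 /\ 0 < c /\
  forall z1 z2 z3 z4,
    w1 * z1 * (L11 * z1) + w2 * z2 * (L21 * z1 + L22 * z2)
    + w3 * z3 * (L31 * z1 + L32 * z2 + L33 * z3)
    + w4 * z4 * (L41 * z1 + L42 * z2 + L43 * z3 + L44 * z4)
    <= - c * (w1 * z1 ^ 2 + w2 * z2 ^ 2 + w3 * z3 ^ 2 + w4 * z4 ^ 2).
Proof.
  intros H1 H2 H3 H4.
  set (m := Rmin (Rmin (- L11) (- L22)) (Rmin (- L33) (- L44))).
  pose proof (Rmin_l (Rmin (- L11) (- L22)) (Rmin (- L33) (- L44)));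
  pose proof (Rmin_r (Rmin (- L11) (- L22)) (Rmin (- L33) (- L44)));
  pose proof (Rmin_l (- L11) (- L22)); pose proof (Rmin_r (- L11) (- L22));
  pose proof (Rmin_l (- L33) (- L44)); pose proof (Rmin_r (- L33) (- L44)).
  assert (Hm : 0 < m) by (unfold m; repeat apply Rmin_pos; lra).
  destruct (lower_triangular_form_neg_def_margin m L11 L21 L22 L31 L32 L33 L41 L42 L43 L44 Hm)
    as (w1 & w2 & w3 & w4 & ? & ? & ? & ? & Hform); try (unfold m; lra).
  exists w1, w2, w3, w4, (m / 4). repeat split; try lra. exact Hform.
Qed.

(** * Differential inequalities *)

Definition right_cont (h : R -> R) (t : R) : Prop :=
  filterlim h (at_right t) (locally (h t)).

Lemma right_cont_eps h t : right_cont h t -> forall eps, 0 < eps ->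
  exists del, 0 < del /\ forall s, t < s < t + del -> Rabs (h s - h t) < eps.
Proof.
  intros H eps Heps. destruct (H _ (locally_ball (h t) (mkposreal eps Heps))) as [del Hdel].
  exists del. split; [apply cond_pos |]. intros s [Hs1 Hs2].
  apply (Hdel s); [| exact Hs1].
  unfold ball; simpl; unfold AbsRing_ball, abs, minus, plus, opp; simpl.
  rewrite Rabs_right; lra.
Qed.

Lemma right_cont_of_continuous h t : continuous h t -> right_cont h t.
Proof. intros H P HP. destruct (H P HP) as [del Hdel]. exists del. intros y Hy _. apply Hdel, Hy. Qed.

Lemma right_cont_of_is_derive h t l : is_derive h t l -> right_cont h t.
Proof. intros H. apply right_cont_of_continuous, (ex_derive_continuous (K := R_AbsRing) (V := R_NormedModule)). exists l. exact H. Qed.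

Lemma right_cont_plus f g t : right_cont f t -> right_cont g t -> right_cont (fun s => f s + g s) t.
Proof. intros Hf Hg. eapply filterlim_comp_2; [exact Hf | exact Hg | apply (filterlim_plus (V := R_NormedModule))]. Qed.

Lemma right_cont_mult f g t : right_cont f t -> right_cont g t -> right_cont (fun s => f s * g s) t.
Proof. intros Hf Hg. eapply filterlim_comp_2; [exact Hf | exact Hg | apply (filterlim_mult (K := R_AbsRing))]. Qed.

Lemma nonincreasing_of_derive_nonpos (h dh : R -> R) (b : R) :
  0 <= b -> (forall t, 0 < t <= b -> is_derive h t (dh t)) ->
  (forall t, 0 < t < b -> dh t <= 0) -> right_cont h 0 -> h b <= h 0.
Proof.
  intros Hb Hd Hneg Hrc.
  destruct (Req_dec b 0) as [-> | Hb0]; [lra |].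
  apply Rnot_lt_le. intros Hlt.
  destruct (right_cont_eps h 0 Hrc (h b - h 0) ltac:(lra)) as (del & Hdel & Hh).
  set (s := Rmin (del / 2) (b / 2)).
  pose proof (Rmin_l (del / 2) (b / 2)); pose proof (Rmin_r (del / 2) (b / 2)).
  assert (Hs0 : 0 < s) by (unfold s; apply Rmin_pos; lra).
  assert (Hhs : Rabs (h s - h 0) < h b - h 0) by (apply Hh; unfold s in *; lra).
  assert (Emin : Rmin s b = s) by (apply Rmin_left; unfold s in *; lra).
  assert (Emax : Rmax s b = b) by (apply Rmax_right; unfold s in *; lra).
  destruct (MVT_gen h s b (fun t => if Rlt_dec t b then dh t else 0)) as (z & Hz & Heq);
    rewrite ?Emin, ?Emax in *.
  - intros x Hx. destruct (Rlt_dec x b); [apply Hd; lra | lra].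
  - intros x Hx.
    apply continuity_pt_filterlim, (ex_derive_continuous (K := R_AbsRing) (V := R_NormedModule)).
    exists (dh x). apply Hd; lra.
  - assert (Hdz : (if Rlt_dec z b then dh z else 0) <= 0).
    { destruct (Rlt_dec z b); [apply Hneg; unfold s in *; lra | lra]. }
    pose proof (Rabs_def2 _ _ Hhs). unfold s in *. nra.
Qed.

Lemma exp_weighted_nonincreasing (g dg : R -> R) (c b : R) :
  0 <= b -> right_cont g 0 -> (forall t, 0 < t <= b -> is_derive g t (dg t)) ->
  (forall t, 0 < t < b -> dg t <= - c * g t) -> g b * exp (c * b) <= g 0.
Proof.
  intros Hb Hrc Hd Hdec.
  replace (g 0) with (g 0 * exp (c * 0)) by (rewrite Rmult_0_r, exp_0; ring).
  apply (nonincreasing_of_derive_nonpos (fun s => g s * exp (c * s))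
           (fun s => (dg s + c * g s) * exp (c * s))); auto.
  - intros t Ht.
    replace ((dg t + c * g t) * exp (c * t)) with (dg t * exp (c * t) + g t * (c * exp (c * t)))
      by ring.
    apply (is_derive_mult g (fun s => exp (c * s))); [apply Hd, Ht | | intros; apply Rmult_comm].
    auto_derive; [exact I | ring].
  - intros t Ht. pose proof (exp_pos (c * t)). specialize (Hdec t Ht).
    apply Rmult_le_0_r; lra.
  - apply right_cont_mult; [exact Hrc |].
    apply right_cont_of_continuous, (ex_derive_continuous (K := R_AbsRing) (V := R_NormedModule)). auto_derive. auto.
Qed.

Lemma right_cont_induction (P : R -> Prop) (t1 : R) :
  (forall b, 0 <= b <= t1 -> (forall tau, 0 <= tau < b -> P tau) -> P b) ->
  (forall b, 0 <= b < t1 -> P b -> exists eta, 0 < eta /\ forall s, b <= s < b + eta -> P s) ->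
  forall tau, 0 <= tau <= t1 -> P tau.
Proof.
  intros Hstep Hopen tau Htau.
  assert (Ht1 : 0 <= t1) by lra.
  set (E := fun s => 0 <= s <= t1 /\ forall tau, 0 <= tau <= s -> P tau).
  assert (HE0 : E 0).
  { split; [lra |]. intros x Hx. replace x with 0 by lra.
    apply Hstep; [lra | intros; lra]. }
  destruct (completeness E (ex_intro _ t1 (fun x Hx => proj2 (proj1 Hx))) (ex_intro _ 0 HE0))
    as [m [Hub Hlub]].
  assert (Hm0 : 0 <= m) by (apply Hub, HE0).
  assert (Hm1 : m <= t1) by (apply Hlub; intros x [Hx _]; lra).
  assert (Hbelow : forall x, 0 <= x < m -> P x).
  { intros x Hx. apply NNPP. intros HPx.
    assert (is_upper_bound E x)
      by (intros y [Hy Hy2]; apply Rnot_lt_le; intros Hlt; apply HPx, Hy2; lra).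
    pose proof (Hlub x H). lra. }
  assert (HPm : forall x, 0 <= x <= m -> P x).
  { intros x Hx. destruct (Req_dec x m) as [-> | Hxm];
      [apply Hstep; [lra | exact Hbelow] | apply Hbelow; lra]. }
  destruct (Req_dec m t1) as [<- | Hmt]; [apply HPm; lra |].
  destruct (Hopen m ltac:(lra) (HPm m ltac:(lra))) as (eta & Heta & Hs).
  assert (HE : E (Rmin (m + eta / 2) t1)).
  { split; [split; [apply Rmin_glb; lra | apply Rmin_r] |].
    intros x Hx. destruct (Rle_dec x m); [apply HPm; lra |].
    apply Hs. pose proof (Rmin_l (m + eta / 2) t1). lra. }
  pose proof (Hub _ HE). assert (m < Rmin (m + eta / 2) t1) by (apply Rmin_glb_lt; lra). lra.
Qed.

Lemma exp_decay_below_level (g dg : R -> R) (c L : R) (T : Rbar) :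
  0 < c -> g 0 < L -> (forall t, 0 <= t -> Rbar_lt t T -> 0 <= g t) ->
  right_cont g 0 -> (forall t, 0 < t -> Rbar_lt t T -> is_derive g t (dg t)) ->
  (forall t, 0 < t -> Rbar_lt t T -> g t < L -> dg t <= - c * g t) ->
  forall t, 0 <= t -> Rbar_lt t T -> g t * exp (c * t) <= g 0.
Proof.
  intros Hc HL Hpos Hrc Hd Hdec t Ht HtT.
  assert (HT : forall s, s <= t -> Rbar_lt s T)
    by (intros s Hs; eapply Rbar_le_lt_trans; [| exact HtT]; exact Hs).
  assert (Hd' : forall b, b <= t -> forall s, 0 < s <= b -> is_derive g s (dg s))
    by (intros b Hb s Hs; apply Hd; [lra | apply HT; lra]).
  assert (Hbelow : forall s, 0 <= s <= t -> g s < L).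
  { apply right_cont_induction.
    - intros b Hb Hlt.
      assert (Hw : g b * exp (c * b) <= g 0).
      { apply (exp_weighted_nonincreasing g dg); [lra | exact Hrc | apply (Hd' b); lra |].
        intros s Hs. apply Hdec, Hlt; [lra | apply HT; lra | lra]. }
      pose proof (exp_ineq1_le (c * b)). pose proof (Hpos b ltac:(lra) (HT b ltac:(lra))).
      assert (0 <= c * b) by nra. nra.
    - intros b Hb Hgb.
      assert (Hrb : right_cont g b).
      { destruct (Req_dec b 0) as [-> | Hb0]; [exact Hrc |].
        apply (right_cont_of_is_derive _ _ (dg b)), (Hd' b); lra. }
      destruct (right_cont_eps g b Hrb (L - g b) ltac:(lra)) as (del & Hdel & Hg).
      exists del. split; [exact Hdel |]. intros s Hs.
      destruct (Req_dec s b) as [-> | Hsb]; [exact Hgb |].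
      pose proof (Rabs_def2 _ _ (Hg s ltac:(lra))). lra. }
  apply (exp_weighted_nonincreasing g dg); [lra | exact Hrc | apply (Hd' t); lra |].
  intros s Hs. apply Hdec, Hbelow; [lra | apply HT; lra | lra].
Qed.

(** * Stability from a negative definite linearisation *)

Lemma quad_approx_vanishing_remainder f p g1 g2 g3 g4 :
  quad_approx f p g1 g2 g3 g4 -> f p = 0 ->
  exists C d, 0 < d /\ 0 <= C /\ forall q, dist4 q p < d -> forall w y, 0 <= w ->
    Rabs y <= dist4 q p ->
    w * y * f q <= w * y * (g1 * (c1 q - c1 p) + g2 * (c2 q - c2 p)
                             + g3 * (c3 q - c3 p) + g4 * (c4 q - c4 p))
                   + w * C * dist4 q p ^ 3.
Proof.
  intros (C & d & Hd & H) Hfp. exists (Rabs C), d.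
  split; [exact Hd | split; [apply Rabs_pos |]]. intros q Hq w y Hw Hy.
  specialize (H q Hq). rewrite Hfp, Rminus_0_r in H.
  set (lin := g1 * (c1 q - c1 p) + g2 * (c2 q - c2 p) + g3 * (c3 q - c3 p)
              + g4 * (c4 q - c4 p)) in *.
  replace (w * y * f q) with (w * y * lin + w * (y * (f q - lin))) by ring.
  apply Rplus_le_compat_l.
  replace (w * Rabs C * dist4 q p ^ 3) with (w * (dist4 q p * (Rabs C * dist4 q p ^ 2)))
    by ring.
  apply Rmult_le_compat_l; [exact Hw |].
  eapply Rle_trans; [apply Rle_abs |]. rewrite Rabs_mult.
  apply Rmult_le_compat; [apply Rabs_pos | apply Rabs_pos | exact Hy |].
  eapply Rle_trans; [exact H | apply Rle_mul_abs_sqr].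
Qed.

Lemma dist4_sqr_le q p : dist4 q p ^ 2 <=
  (c1 q - c1 p) ^ 2 + (c2 q - c2 p) ^ 2 + (c3 q - c3 p) ^ 2 + (c4 q - c4 p) ^ 2.
Proof.
  rewrite <- (pow2_abs (c1 q - c1 p)), <- (pow2_abs (c2 q - c2 p)),
    <- (pow2_abs (c3 q - c3 p)), <- (pow2_abs (c4 q - c4 p)).
  pose proof (pow2_ge_0 (Rabs (c1 q - c1 p))); pose proof (pow2_ge_0 (Rabs (c2 q - c2 p)));
  pose proof (pow2_ge_0 (Rabs (c3 q - c3 p))); pose proof (pow2_ge_0 (Rabs (c4 q - c4 p))).
  unfold dist4, Rmax. repeat destruct Rle_dec; lra.
Qed.

Lemma sqr_le_dist4 x q p : Rabs x <= dist4 q p -> x ^ 2 <= dist4 q p ^ 2.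
Proof. intros H. rewrite <- pow2_abs. apply pow_incr. split; [apply Rabs_pos | exact H]. Qed.

Section LinearizedStability.

Variables (V : state -> state) (p : state).
Variables (J11 J12 J13 J14 J21 J22 J23 J24 J31 J32 J33 J34 J41 J42 J43 J44 : R).
Variables (w1 w2 w3 w4 c : R).
Hypothesis Heq : equilibrium V p.
Hypothesis HJ1 : quad_approx (fun q => c1 (V q)) p J11 J12 J13 J14.
Hypothesis HJ2 : quad_approx (fun q => c2 (V q)) p J21 J22 J23 J24.
Hypothesis HJ3 : quad_approx (fun q => c3 (V q)) p J31 J32 J33 J34.
Hypothesis HJ4 : quad_approx (fun q => c4 (V q)) p J41 J42 J43 J44.
Hypotheses (Hw1 : 0 < w1) (Hw2 : 0 < w2) (Hw3 : 0 < w3) (Hw4 : 0 < w4) (Hc : 0 < c).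
Hypothesis Hform : forall y1 y2 y3 y4,
  w1 * y1 * (J11 * y1 + J12 * y2 + J13 * y3 + J14 * y4)
  + w2 * y2 * (J21 * y1 + J22 * y2 + J23 * y3 + J24 * y4)
  + w3 * y3 * (J31 * y1 + J32 * y2 + J33 * y3 + J34 * y4)
  + w4 * y4 * (J41 * y1 + J42 * y2 + J43 * y3 + J44 * y4)
  <= - c * (w1 * y1 ^ 2 + w2 * y2 ^ 2 + w3 * y3 ^ 2 + w4 * y4 ^ 2).

Definition lyap (q : state) : R :=
  w1 * (c1 q - c1 p) ^ 2 + w2 * (c2 q - c2 p) ^ 2 + w3 * (c3 q - c3 p) ^ 2
  + w4 * (c4 q - c4 p) ^ 2.

(* Half the derivative of [lyap] along the flow. *)
Definition lyap_rate (q : state) : R :=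
  w1 * (c1 q - c1 p) * c1 (V q) + w2 * (c2 q - c2 p) * c2 (V q)
  + w3 * (c3 q - c3 p) * c3 (V q) + w4 * (c4 q - c4 p) * c4 (V q).

Definition wmin : R := Rmin (Rmin w1 w2) (Rmin w3 w4).
Definition wsum : R := w1 + w2 + w3 + w4.

Lemma wmin_pos : 0 < wmin.
Proof. unfold wmin; repeat apply Rmin_pos; auto. Qed.

Lemma wmin_le : wmin <= w1 /\ wmin <= w2 /\ wmin <= w3 /\ wmin <= w4.
Proof.
  unfold wmin. pose proof (Rmin_l (Rmin w1 w2) (Rmin w3 w4));
  pose proof (Rmin_r (Rmin w1 w2) (Rmin w3 w4)); pose proof (Rmin_l w1 w2);
  pose proof (Rmin_r w1 w2); pose proof (Rmin_l w3 w4); pose proof (Rmin_r w3 w4). lra.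
Qed.

Lemma wmin_le_wsum : wmin <= wsum.
Proof. destruct wmin_le as (? & _). unfold wsum. lra. Qed.

Lemma lyap_ge q : wmin * dist4 q p ^ 2 <= lyap q.
Proof.
  pose proof (dist4_sqr_le q p). destruct wmin_le as (A1 & A2 & A3 & A4).
  pose proof (Rmult_le_compat_r _ _ _ (pow2_ge_0 (c1 q - c1 p)) A1);
  pose proof (Rmult_le_compat_r _ _ _ (pow2_ge_0 (c2 q - c2 p)) A2);
  pose proof (Rmult_le_compat_r _ _ _ (pow2_ge_0 (c3 q - c3 p)) A3);
  pose proof (Rmult_le_compat_r _ _ _ (pow2_ge_0 (c4 q - c4 p)) A4).
  pose proof (Rmult_le_compat_l _ _ _ (Rlt_le _ _ wmin_pos) H).
  unfold lyap. lra.
Qed.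

Lemma lyap_le q : lyap q <= wsum * dist4 q p ^ 2.
Proof.
  pose proof (Rmult_le_compat_l w1 _ _ ltac:(lra) (sqr_le_dist4 _ q p (dist4_c1 q p))).
  pose proof (Rmult_le_compat_l w2 _ _ ltac:(lra) (sqr_le_dist4 _ q p (dist4_c2 q p))).
  pose proof (Rmult_le_compat_l w3 _ _ ltac:(lra) (sqr_le_dist4 _ q p (dist4_c3 q p))).
  pose proof (Rmult_le_compat_l w4 _ _ ltac:(lra) (sqr_le_dist4 _ q p (dist4_c4 q p))).
  unfold lyap, wsum. lra.
Qed.

Lemma lyap_ge_0 q : 0 <= lyap q.
Proof.
  pose proof (lyap_ge q). pose proof (pow2_ge_0 (dist4 q p)). pose proof wmin_pos. nra.
Qed.

Lemma dist4_lt_of_lyap_lt q e : 0 < e -> lyap q < wmin * e ^ 2 -> dist4 q p < e.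
Proof.
  intros He H. apply Rnot_le_lt. intros Hge. pose proof (lyap_ge q). pose proof wmin_pos.
  assert (e ^ 2 <= dist4 q p ^ 2) by (apply pow_incr; lra). nra.
Qed.

Lemma lyap_rate_le_near :
  exists d0, 0 < d0 /\ forall q, dist4 q p < d0 -> lyap_rate q <= - (c / 2) * lyap q.
Proof.
  assert (E : V p = (0, 0, 0, 0)) by exact Heq.
  destruct (quad_approx_vanishing_remainder _ _ _ _ _ _ HJ1 ltac:(cbv beta; rewrite E; reflexivity))
    as (C1 & e1 & He1 & HC1 & H1).
  destruct (quad_approx_vanishing_remainder _ _ _ _ _ _ HJ2 ltac:(cbv beta; rewrite E; reflexivity))
    as (C2 & e2 & He2 & HC2 & H2).
  destruct (quad_approx_vanishing_remainder _ _ _ _ _ _ HJ3 ltac:(cbv beta; rewrite E; reflexivity))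
    as (C3 & e3 & He3 & HC3 & H3).
  destruct (quad_approx_vanishing_remainder _ _ _ _ _ _ HJ4 ltac:(cbv beta; rewrite E; reflexivity))
    as (C4 & e4 & He4 & HC4 & H4).
  set (S := w1 * C1 + w2 * C2 + w3 * C3 + w4 * C4).
  assert (HS : 0 <= S) by (unfold S; nra).
  pose proof wmin_pos.
  exists (Rmin (Rmin (Rmin e1 e2) (Rmin e3 e4)) (c * wmin / (2 * (S + 1)))).
  split. { repeat apply Rmin_pos; auto. apply Rdiv_lt_0_compat; nra. }
  intros q Hq.
  apply Rmin_Rgt in Hq as [[[Hq1 Hq2]%Rmin_Rgt [Hq3 Hq4]%Rmin_Rgt]%Rmin_Rgt Hq5].
  specialize (H1 q Hq1 w1 _ ltac:(lra) (dist4_c1 q p)).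
  specialize (H2 q Hq2 w2 _ ltac:(lra) (dist4_c2 q p)).
  specialize (H3 q Hq3 w3 _ ltac:(lra) (dist4_c3 q p)).
  specialize (H4 q Hq4 w4 _ ltac:(lra) (dist4_c4 q p)).
  pose proof (Hform (c1 q - c1 p) (c2 q - c2 p) (c3 q - c3 p) (c4 q - c4 p)).
  pose proof (lyap_ge q). pose proof (dist4_ge_0 q p).
  set (D := dist4 q p) in *.
  assert (HSD : S * D <= c * wmin / 2).
  { apply (Rmult_lt_compat_l (2 * (S + 1))) in Hq5; [| lra].
    replace (2 * (S + 1) * (c * wmin / (2 * (S + 1)))) with (c * wmin) in Hq5
      by (field; lra).
    nra. }
  assert (S * D ^ 3 <= (c / 2) * lyap q).
  { replace (S * D ^ 3) with ((S * D) * D ^ 2) by ring.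
    apply Rle_trans with ((c * wmin / 2) * D ^ 2); [apply Rmult_le_compat_r; [apply pow2_ge_0 | exact HSD] |].
    replace (c * wmin / 2 * D ^ 2) with ((c / 2) * (wmin * D ^ 2)) by field.
    apply Rmult_le_compat_l; lra. }
  unfold lyap_rate, lyap, S in *. lra.
Qed.

Lemma is_derive_lyap phi T : solution_on V phi T -> forall t, 0 < t -> Rbar_lt t T ->
  is_derive (fun s => lyap (phi s)) t (2 * lyap_rate (phi t)).
Proof.
  intros Hsol t Ht HtT.
  destruct (Hsol c1 ltac:(simpl; tauto)) as [_ D1]. specialize (D1 t Ht HtT).
  destruct (Hsol c2 ltac:(simpl; tauto)) as [_ D2]. specialize (D2 t Ht HtT).
  destruct (Hsol c3 ltac:(simpl; tauto)) as [_ D3]. specialize (D3 t Ht HtT).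
  destruct (Hsol c4 ltac:(simpl; tauto)) as [_ D4]. specialize (D4 t Ht HtT).
  set (f1 := fun s => c1 (phi s)) in *. set (f2 := fun s => c2 (phi s)) in *.
  set (f3 := fun s => c3 (phi s)) in *. set (f4 := fun s => c4 (phi s)) in *.
  change (is_derive (fun s => w1 * (f1 s - c1 p) ^ 2 + w2 * (f2 s - c2 p) ^ 2
     + w3 * (f3 s - c3 p) ^ 2 + w4 * (f4 s - c4 p) ^ 2) t (2 * lyap_rate (phi t))).
  auto_derive.
  - repeat split; eexists; first [exact D1 | exact D2 | exact D3 | exact D4].
  - assert (E1 : Derive (fun x => f1 x) t = c1 (V (phi t))) by exact (is_derive_unique _ _ _ D1).
    assert (E2 : Derive (fun x => f2 x) t = c2 (V (phi t))) by exact (is_derive_unique _ _ _ D2).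
    assert (E3 : Derive (fun x => f3 x) t = c3 (V (phi t))) by exact (is_derive_unique _ _ _ D3).
    assert (E4 : Derive (fun x => f4 x) t = c4 (V (phi t))) by exact (is_derive_unique _ _ _ D4).
    rewrite E1, E2, E3, E4.
    unfold lyap_rate, f1, f2, f3, f4. ring.
Qed.

Lemma right_cont_lyap phi T : solution_on V phi T -> right_cont (fun s => lyap (phi s)) 0.
Proof.
  intros Hsol.
  assert (Hsq : forall (f : state -> R) w, In f comps ->
            right_cont (fun s => w * (f (phi s) - f p) ^ 2) 0).
  { intros f w Hf. destruct (Hsol f Hf) as [Hrc _].
    assert (Hdev : right_cont (fun s => f (phi s) - f p) 0)
      by exact (right_cont_plus (fun s => f (phi s)) (fun _ => - f p) 0 Hrc (filterlim_const _)).
    apply right_cont_mult; [apply filterlim_const |].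
    simpl. apply right_cont_mult; [exact Hdev |].
    apply right_cont_mult; [exact Hdev | apply filterlim_const]. }
  unfold lyap.
  repeat apply right_cont_plus; apply Hsq; simpl; tauto.
Qed.

Lemma lyap_lt_of_dist4_lt q e : 0 < e -> dist4 q p < e * wmin / (2 * wsum) ->
  lyap q < wmin * e ^ 2.
Proof.
  intros He Hd. pose proof wmin_pos. pose proof wmin_le_wsum.
  pose proof (lyap_le q). pose proof (dist4_ge_0 q p).
  assert (dist4 q p ^ 2 <= (e * wmin / (2 * wsum)) ^ 2) by (apply pow_incr; lra).
  assert (wsum * (e * wmin / (2 * wsum)) ^ 2 < wmin * e ^ 2).
  { replace (wsum * (e * wmin / (2 * wsum)) ^ 2) with (wmin * e ^ 2 * (wmin / (4 * wsum)))
      by (field; lra).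
    assert (wmin / (4 * wsum) < 1)
      by (apply (Rmult_lt_reg_r (4 * wsum)); [lra |]; field_simplify; lra).
    assert (0 < wmin * e ^ 2) by (apply Rmult_lt_0_compat; [lra | apply pow_lt; lra]). nra. }
  nra.
Qed.

Lemma lyap_decay d0 e : 0 < e -> e <= d0 ->
  (forall q, dist4 q p < d0 -> lyap_rate q <= - (c / 2) * lyap q) ->
  forall phi T, solution_on V phi T -> lyap (phi 0) < wmin * e ^ 2 ->
  forall t, 0 <= t -> Rbar_lt t T -> lyap (phi t) * exp (c * t) <= lyap (phi 0).
Proof.
  intros He Hed Hloc phi T Hsol H0.
  apply (exp_decay_below_level (fun s => lyap (phi s)) (fun s => 2 * lyap_rate (phi s))
           c (wmin * e ^ 2) T Hc H0).
  - intros; apply lyap_ge_0.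
  - exact (right_cont_lyap phi T Hsol).
  - exact (is_derive_lyap phi T Hsol).
  - intros t Ht HtT Hlt. pose proof (dist4_lt_of_lyap_lt (phi t) e He Hlt).
    specialize (Hloc (phi t) ltac:(lra)). lra.
Qed.

Lemma lyap_stable : forall eps, 0 < eps -> exists delta, 0 < delta /\
  forall phi T, solution_on V phi T -> dist4 (phi 0) p < delta ->
  forall t, 0 <= t -> Rbar_lt t T -> dist4 (phi t) p < eps.
Proof.
  destruct lyap_rate_le_near as (d0 & Hd0 & Hloc).
  pose proof wmin_pos as Hwmin. pose proof wmin_le_wsum as Hwsum.
  intros eps Heps. set (e := Rmin eps d0).
  assert (He : 0 < e) by (apply Rmin_pos; lra).
  exists (e * wmin / (2 * wsum)). split; [apply Rdiv_lt_0_compat; nra |].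
  intros phi T Hsol Hd t Ht HtT.
  pose proof (lyap_lt_of_dist4_lt (phi 0) e He Hd) as H0.
  pose proof (lyap_decay d0 e He (Rmin_r _ _) Hloc phi T Hsol H0 t Ht HtT).
  assert (Hexp : 1 <= exp (c * t))
    by (pose proof (exp_ineq1_le (c * t)); pose proof (Rmult_le_pos c t ltac:(lra) Ht); lra).
  pose proof (Rmult_le_compat_l _ _ _ (lyap_ge_0 (phi t)) Hexp).
  assert (Ht' : lyap (phi t) < wmin * e ^ 2) by lra.
  pose proof (dist4_lt_of_lyap_lt (phi t) e He Ht'). pose proof (Rmin_l eps d0).
  unfold e in *. lra.
Qed.

Lemma lyap_attractive : exists delta, 0 < delta /\
  forall phi, solution_on V phi p_infty -> dist4 (phi 0) p < delta ->
  forall f, In f comps -> is_lim (fun t => f (phi t)) p_infty (f p).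
Proof.
  destruct lyap_rate_le_near as (d0 & Hd0 & Hloc).
  pose proof wmin_pos as Hwmin. pose proof wmin_le_wsum as Hwsum.
  exists (d0 * wmin / (2 * wsum)). split; [apply Rdiv_lt_0_compat; nra |].
  intros phi Hsol Hd.
  pose proof (lyap_lt_of_dist4_lt (phi 0) d0 Hd0 Hd) as H0.
  pose proof (lyap_decay d0 d0 Hd0 (Rle_refl _) Hloc phi p_infty Hsol H0) as Hdec.
  assert (Hconv : forall eps, 0 < eps -> exists M, forall t, M < t -> dist4 (phi t) p < eps).
  { intros eps Heps. set (g0 := lyap (phi 0)). pose proof (lyap_ge_0 (phi 0)).
    assert (Hpos : 0 < wmin * eps ^ 2 * c)
      by (apply Rmult_lt_0_compat; [apply Rmult_lt_0_compat; [lra | apply pow_lt; lra] | lra]).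
    exists (Rmax 0 (g0 / (wmin * eps ^ 2 * c))). intros t [Ht0 Ht1]%Rmax_Rlt.
    assert (Hg0 : g0 < wmin * eps ^ 2 * (c * t)).
    { apply (Rmult_lt_compat_l (wmin * eps ^ 2 * c)) in Ht1; [| lra].
      replace (wmin * eps ^ 2 * c * (g0 / (wmin * eps ^ 2 * c))) with g0 in Ht1
        by (field; lra).
      lra. }
    specialize (Hdec t ltac:(lra) I). fold g0 in Hdec.
    pose proof (exp_ineq1_le (c * t)). pose proof (lyap_ge_0 (phi t)).
    apply dist4_lt_of_lyap_lt; [lra |].
    assert (lyap (phi t) * (c * t) <= lyap (phi t) * exp (c * t))
      by (apply Rmult_le_compat_l; lra).
    apply (Rmult_lt_reg_r (c * t)); [apply Rmult_lt_0_compat; lra | lra]. }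
  intros f Hin. apply is_lim_spec. intros eps.
  destruct (Hconv eps (cond_pos eps)) as [M HM]. exists M. intros t Ht. specialize (HM t Ht).
  destruct Hin as [<- | [<- | [<- | [<- | []]]]]; eapply Rle_lt_trans; try exact HM.
  - apply dist4_c1.
  - apply dist4_c2.
  - apply dist4_c3.
  - apply dist4_c4.
Qed.

Lemma loc_asympt_stable_of_lyap_form : loc_asympt_stable V p.
Proof. split; [exact Heq | split; [exact lyap_stable | exact lyap_attractive]]. Qed.

End LinearizedStability.

(* The suffix gives the order of the coordinates in which the Jacobian is lower triangular. *)
Lemma loc_asympt_stable_of_triangular_2314 V p
    J11 J12 J13 J14 J21 J22 J23 J24 J31 J32 J33 J34 J41 J42 J43 J44 :
  equilibrium V p ->
  quad_approx (fun q => c1 (V q)) p J11 J12 J13 J14 ->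
  quad_approx (fun q => c2 (V q)) p J21 J22 J23 J24 ->
  quad_approx (fun q => c3 (V q)) p J31 J32 J33 J34 ->
  quad_approx (fun q => c4 (V q)) p J41 J42 J43 J44 ->
  J14 = 0 -> J21 = 0 -> J23 = 0 -> J24 = 0 -> J31 = 0 -> J34 = 0 ->
  J11 < 0 -> J22 < 0 -> J33 < 0 -> J44 < 0 -> loc_asympt_stable V p.
Proof.
  intros Heq H1 H2 H3 H4 -> -> -> -> -> -> N11 N22 N33 N44.
  destruct (lower_triangular_form_neg_def J22 J32 J33 J12 J13 J11 J42 J43 J41 J44 N22 N33 N11 N44)
    as (w2 & w3 & w1 & w4 & c & ? & ? & ? & ? & ? & Hform).
  apply (loc_asympt_stable_of_lyap_form V p _ _ _ _ _ _ _ _ _ _ _ _ _ _ _ _ w1 w2 w3 w4 c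
           Heq H1 H2 H3 H4); auto.
  intros y1 y2 y3 y4. specialize (Hform y2 y3 y1 y4). lra.
Qed.

Lemma loc_asympt_stable_of_triangular_1243 V p
    J11 J12 J13 J14 J21 J22 J23 J24 J31 J32 J33 J34 J41 J42 J43 J44 :
  equilibrium V p ->
  quad_approx (fun q => c1 (V q)) p J11 J12 J13 J14 ->
  quad_approx (fun q => c2 (V q)) p J21 J22 J23 J24 ->
  quad_approx (fun q => c3 (V q)) p J31 J32 J33 J34 ->
  quad_approx (fun q => c4 (V q)) p J41 J42 J43 J44 ->
  J12 = 0 -> J13 = 0 -> J14 = 0 -> J23 = 0 -> J24 = 0 -> J43 = 0 ->
  J11 < 0 -> J22 < 0 -> J33 < 0 -> J44 < 0 -> loc_asympt_stable V p.
Proof.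
  intros Heq H1 H2 H3 H4 -> -> -> -> -> -> N11 N22 N33 N44.
  destruct (lower_triangular_form_neg_def J11 J21 J22 J41 J42 J44 J31 J32 J34 J33 N11 N22 N44 N33)
    as (w1 & w2 & w4 & w3 & c & ? & ? & ? & ? & ? & Hform).
  apply (loc_asympt_stable_of_lyap_form V p _ _ _ _ _ _ _ _ _ _ _ _ _ _ _ _ w1 w2 w3 w4 c
           Heq H1 H2 H3 H4); auto.
  intros y1 y2 y3 y4. specialize (Hform y1 y2 y4 y3). lra.
Qed.

(** * The host-parasite model *)

Section HostParasite.

Variables (K1 K2 : R -> R) (a : R -> R -> R) (d r1 r2 h e s1 s2 : R).
Hypotheses (K1_pos : forall x, 0 < K1 x) (K2_pos : forall x, 0 < K2 x)
  (a_pos : forall x y, 0 < a x y).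
Hypotheses (K1_smooth : smooth1 K1) (K2_smooth : smooth1 K2) (a_smooth : smooth2 a).
Hypotheses (hr1 : 0 < r1) (hr2 : 0 < r2) (hh : 0 < h) (he : 0 < e) (hs1 : 0 < s1) (hs2 : 0 < s2).

Local Notation V := (hp_field K1 K2 a r1 r2 h e d s1 s2).

Ltac simpl_coords := cbv beta; cbn [c1 c2 c3 c4 fst snd pderivs].

Ltac solve_quad_approx :=
  repeat match goal with
  | |- quad_approx _ _ _ _ _ _ =>
    first [ apply quad_approx_const | apply quad_approx_c1 | apply quad_approx_c2
          | apply quad_approx_c3 | apply quad_approx_c4
          | eapply quad_approx_minus | eapply quad_approx_plus | eapply quad_approx_div
          | eapply quad_approx_mult | eapply quad_approx_pow2
          | eapply quad_approx_comp_smooth1 with (K := K1); [| exact K1_smooth]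
          | eapply quad_approx_comp_smooth1 with (K := K2); [| exact K2_smooth]
          | eapply quad_approx_comp_Derive with (K := K1); [| exact K1_smooth]
          | eapply quad_approx_comp_Derive with (K := K2); [| exact K2_smooth]
          | eapply quad_approx_comp_pderivs with (a := a) (l := nil); [| | exact a_smooth]
          | eapply quad_approx_comp_pderivs with (a := a) (l := (true :: nil));
              [| | exact a_smooth]
          | eapply quad_approx_comp_pderivs with (a := a) (l := (false :: nil));
              [| | exact a_smooth] ]
  end.

Ltac solve_pos :=
  repeat first [ assumption | apply K1_pos | apply K2_pos | apply a_pos
               | apply Rmult_lt_0_compat | apply Rinv_0_lt_compat | apply pow_lt ];
  try lra.

Ltac solve_nonzero := simpl_coords; apply Rgt_not_eq; solve_pos.

Section HostOnly.

Variables u1 u2 : R.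
Hypotheses (dK1 : Derive K1 u1 = 0) (da2 : pd2 a u1 u2 = 0).

Local Notation host := (K1 u1, 0, u1, u2).

Let den_pos : 0 < 1 + h * a u1 u2 * K1 u1.
Proof. assert (0 < h * a u1 u2 * K1 u1) by solve_pos. lra. Qed.

Ltac solve_entry :=
  simpl_coords; rewrite ?dK1, ?da2; field;
  repeat split; first [apply Rgt_not_eq; solve_pos | lra].

Ltac entry_is v := apply (Rle_lt_trans _ v); [right; solve_entry |].

Lemma host_only_equilibrium : equilibrium V host.
Proof.
  unfold equilibrium, hp_field. simpl_coords. rewrite dK1, da2.
  f_equal; [f_equal; [f_equal |] |]; solve_entry.
Qed.

Lemma host_jacobian_row1 : exists J1 J2 J3 J4,
  quad_approx (fun q => c1 (V q)) host J1 J2 J3 J4 /\ J1 < 0 /\ J4 = 0.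
Proof.
  do 4 eexists. split; [unfold hp_field; solve_quad_approx; solve_nonzero |].
  split; [entry_is (- r1); lra | solve_entry].
Qed.

Lemma host_jacobian_row2 :
  e * a u1 u2 * K1 u1 / (1 + h * a u1 u2 * K1 u1) < d - r2 -> exists J1 J2 J3 J4,
  quad_approx (fun q => c2 (V q)) host J1 J2 J3 J4 /\ J1 = 0 /\ J2 < 0 /\ J3 = 0 /\ J4 = 0.
Proof.
  intros Hlt. do 4 eexists. split; [unfold hp_field; solve_quad_approx; solve_nonzero |].
  split; [solve_entry | split; [| split; solve_entry]].
  entry_is (e * a u1 u2 * K1 u1 / (1 + h * a u1 u2 * K1 u1) - d + r2). lra.
Qed.

Lemma host_jacobian_row3 : Derive_n K1 2 u1 < 0 -> exists J1 J2 J3 J4,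
  quad_approx (fun q => c3 (V q)) host J1 J2 J3 J4 /\ J1 = 0 /\ J3 < 0 /\ J4 = 0.
Proof.
  intros HK1. do 4 eexists. split; [unfold hp_field; solve_quad_approx; solve_nonzero |].
  split; [solve_entry | split; [| solve_entry]].
  entry_is (- (s1 ^ 2 * r1 * (- Derive_n K1 2 u1) * / K1 u1)).
  assert (0 < s1 ^ 2 * r1 * (- Derive_n K1 2 u1) * / K1 u1) by solve_pos. lra.
Qed.

Lemma host_jacobian_row4 : pd2 (pd2 a) u1 u2 < 0 -> exists J1 J2 J3 J4,
  quad_approx (fun q => c4 (V q)) host J1 J2 J3 J4 /\ J4 < 0.
Proof.
  intros Ha. do 4 eexists. split; [unfold hp_field; solve_quad_approx; solve_nonzero |].
  entry_is (- (s2 ^ 2 * e * K1 u1 * (- pd2 (pd2 a) u1 u2) / (1 + h * a u1 u2 * K1 u1) ^ 2)).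
  assert (0 < s2 ^ 2 * e * K1 u1 * (- pd2 (pd2 a) u1 u2) / (1 + h * a u1 u2 * K1 u1) ^ 2)
    by (unfold Rdiv; solve_pos).
  lra.
Qed.

Lemma host_only_stable :
  e * a u1 u2 * K1 u1 / (1 + h * a u1 u2 * K1 u1) < d - r2 ->
  Derive_n K1 2 u1 < 0 -> pd2 (pd2 a) u1 u2 < 0 ->
  loc_asympt_stable V host.
Proof.
  intros Hlt HK1 Ha.
  destruct host_jacobian_row1 as (J11 & J12 & J13 & J14 & H1 & N11 & E14).
  destruct (host_jacobian_row2 Hlt) as (J21 & J22 & J23 & J24 & H2 & E21 & N22 & E23 & E24).
  destruct (host_jacobian_row3 HK1) as (J31 & J32 & J33 & J34 & H3 & E31 & N33 & E34).
  destruct (host_jacobian_row4 Ha) as (J41 & J42 & J43 & J44 & H4 & N44).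
  exact (loc_asympt_stable_of_triangular_2314 V _ _ _ _ _ _ _ _ _ _ _ _ _ _ _ _ _
           host_only_equilibrium H1 H2 H3 H4 E14 E21 E23 E24 E31 E34 N11 N22 N33 N44).
Qed.

End HostOnly.

Section ParasiteOnly.

Variables u1 u2 : R.
Hypotheses (hdr : d < r2) (dK2 : Derive K2 u2 = 0) (da1 : pd1 a u1 u2 = 0).

Local Notation X := (K2 u2 * (1 - d / r2)).
Local Notation parasite := (0, X, u1, u2).

(* The chain rule for [K2] produces its derivative in the form [Derive_n K2 1]. *)
Let dK2' : Derive_n K2 1 u2 = 0 := dK2.

Let X_pos : 0 < X.
Proof.
  apply Rmult_lt_0_compat; [apply K2_pos |].
  assert (d / r2 < 1) by (apply (Rmult_lt_reg_r r2); [lra |]; field_simplify; lra). lra.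
Qed.

Ltac solve_entry :=
  simpl_coords; rewrite ?dK2, ?dK2', ?da1; field;
  repeat split; first [apply Rgt_not_eq; solve_pos | lra].

Ltac entry_is v := apply (Rle_lt_trans _ v); [right; solve_entry |].

Lemma parasite_only_equilibrium : equilibrium V parasite.
Proof.
  unfold equilibrium, hp_field. simpl_coords. rewrite dK2, da1.
  f_equal; [f_equal; [f_equal |] |]; solve_entry.
Qed.

Lemma parasite_jacobian_row1 : r1 / a u1 u2 < X -> exists J1 J2 J3 J4,
  quad_approx (fun q => c1 (V q)) parasite J1 J2 J3 J4 /\ J1 < 0 /\ J2 = 0 /\ J3 = 0 /\ J4 = 0.
Proof.
  intros Hlt. do 4 eexists. split; [unfold hp_field; solve_quad_approx; solve_nonzero |].
  split; [| split; [| split]]; try solve_entry.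
  entry_is (r1 - a u1 u2 * X).
  apply (Rmult_lt_compat_l (a u1 u2)) in Hlt; [| apply a_pos].
  replace (a u1 u2 * (r1 / a u1 u2)) with r1 in Hlt
    by (field; apply Rgt_not_eq, a_pos).
  lra.
Qed.

Lemma parasite_jacobian_row2 : exists J1 J2 J3 J4,
  quad_approx (fun q => c2 (V q)) parasite J1 J2 J3 J4 /\ J2 < 0 /\ J3 = 0 /\ J4 = 0.
Proof.
  do 4 eexists. split; [unfold hp_field; solve_quad_approx; solve_nonzero |].
  split; [| split; solve_entry].
  entry_is (- (r2 * X / K2 u2)).
  assert (0 < r2 * X / K2 u2) by (unfold Rdiv; solve_pos). lra.
Qed.

Lemma parasite_jacobian_row3 : 0 < pd1 (pd1 a) u1 u2 -> exists J1 J2 J3 J4,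
  quad_approx (fun q => c3 (V q)) parasite J1 J2 J3 J4 /\ J3 < 0.
Proof.
  intros Ha. do 4 eexists. split; [unfold hp_field; solve_quad_approx; solve_nonzero |].
  entry_is (- (s1 ^ 2 * X * pd1 (pd1 a) u1 u2)).
  assert (0 < s1 ^ 2 * X * pd1 (pd1 a) u1 u2) by solve_pos. lra.
Qed.

Lemma parasite_jacobian_row4 : Derive_n K2 2 u2 < 0 -> exists J1 J2 J3 J4,
  quad_approx (fun q => c4 (V q)) parasite J1 J2 J3 J4 /\ J3 = 0 /\ J4 < 0.
Proof.
  intros HK2. do 4 eexists. split; [unfold hp_field; solve_quad_approx; solve_nonzero |].
  split; [solve_entry |].
  entry_is (- (s2 ^ 2 * r2 * X * (- Derive_n K2 2 u2) / K2 u2 ^ 2)).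
  assert (0 < s2 ^ 2 * r2 * X * (- Derive_n K2 2 u2) / K2 u2 ^ 2) by (unfold Rdiv; solve_pos).
  lra.
Qed.

Lemma parasite_only_stable :
  r1 / a u1 u2 < X -> 0 < pd1 (pd1 a) u1 u2 -> Derive_n K2 2 u2 < 0 ->
  loc_asympt_stable V parasite.
Proof.
  intros Hlt Ha HK2.
  destruct (parasite_jacobian_row1 Hlt) as (J11 & J12 & J13 & J14 & H1 & N11 & E12 & E13 & E14).
  destruct parasite_jacobian_row2 as (J21 & J22 & J23 & J24 & H2 & N22 & E23 & E24).
  destruct (parasite_jacobian_row3 Ha) as (J31 & J32 & J33 & J34 & H3 & N33).
  destruct (parasite_jacobian_row4 HK2) as (J41 & J42 & J43 & J44 & H4 & E43 & N44).
  exact (loc_asympt_stable_of_triangular_1243 V _ _ _ _ _ _ _ _ _ _ _ _ _ _ _ _ _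
           parasite_only_equilibrium H1 H2 H3 H4 E12 E13 E14 E23 E24 E43 N11 N22 N33 N44).
Qed.

End ParasiteOnly.

End HostParasite.

Theorem corollary1
  (K1 K2 : R -> R) (a : R -> R -> R) (d r1 r2 h e s1 s2 : R)
  (hK1 : pos_bounded1 K1) (hK1s : smooth1 K1)
  (hK2 : pos_bounded1 K2) (hK2s : smooth1 K2)
  (ha : pos_bounded2 a) (has : smooth2 a)
  (hd : 0 <= d) (hr1 : 0 < r1) (hr2 : 0 < r2) (hh : 0 < h) (he : 0 < e)
  (hs1 : 0 < s1) (hs2 : 0 < s2) :
  let V := hp_field K1 K2 a r1 r2 h e d s1 s2 in
  (* (i) host-only equilibrium *)
  (forall u1 u2 : R,
     Derive K1 u1 = 0 -> pd2 a u1 u2 = 0 ->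
     equilibrium V (K1 u1, 0, u1, u2) /\
     (0 < e * a u1 u2 * K1 u1 / (1 + h * a u1 u2 * K1 u1) ->
      e * a u1 u2 * K1 u1 / (1 + h * a u1 u2 * K1 u1) < d - r2 ->
      Derive_n K1 2 u1 < 0 ->
      pd2 (pd2 a) u1 u2 < 0 ->
      loc_asympt_stable V (K1 u1, 0, u1, u2))) /\
  (* (ii) parasite-only equilibrium *)
  (d < r2 ->
   forall u1 u2 : R,
     Derive K2 u2 = 0 -> pd1 a u1 u2 = 0 ->
     equilibrium V (0, K2 u2 * (1 - d / r2), u1, u2) /\
     (r1 / a u1 u2 < K2 u2 * (1 - d / r2) ->
      0 < pd1 (pd1 a) u1 u2 ->
      Derive_n K2 2 u2 < 0 ->
      loc_asympt_stable V (0, K2 u2 * (1 - d / r2), u1, u2))).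
Proof.
  intros V. destruct hK1 as [K1_pos _], hK2 as [K2_pos _], ha as [a_pos _].
  split.
  - intros u1 u2 dK1 da2. split.
    + now apply host_only_equilibrium.
    + intros _. now apply host_only_stable.
  - intros hdr u1 u2 dK2 da1. split.
    + now apply parasite_only_equilibrium.
    + now apply parasite_only_stable.
Qed.
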